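(* Fix an integer $k\ge1$, let $\Delta_k:=\log(1/2)/\log(1-2^{-k})$, fix $\Delta>0$, and for $n\ge k$ let $m=\lfloor\Delta n\rfloor$. As $n\to\infty$: (i) if $\Delta>\Delta_k$ and $\psi_{\mathsf{FLAT}}(V):=\mathbf{1}\{Z(V)>0\}$, then $$\mathbf{P}_{\text{unif}}(\psi_{\mathsf{FLAT}}=1)\vee\mathbf{P}_{\text{planted}}(\psi_{\mathsf{FLAT}}=0)\to0;$$ (ii) if $\Delta<\Delta_k$, then $$\inf_{\psi}\ \mathbf{P}_{\text{unif}}(\psi=1)\vee\mathbf{P}_{\text{planted}}(\psi=0)\to\tfrac12,$$ where the infimum is over all tests $\psi$, i.e. (possibly randomized) $\{0,1\}$-valued functions of $V$.
   Context: A $k$-flat of $\mathbb{F}_2^n$ is an affine subspace of dimension $n-k$; equivalently a set $\{x\in\mathbb{F}_2^n : \ell_i(x)=\varepsilon_i \ \forall i\in[k]\}$ where $\ell_1,\dots,\ell_k$ are linearly independent linear forms on $\mathbb{F}_2^n$ and $\varepsilon_1,\dots,\varepsilon_k\in\mathbb{F}_2$. Let $q_0$ be the uniform distribution on the set of all $k$-flats, and for $x\in\mathbb{F}_2^n$ let $q_x$ be the uniform distribution on the set of $k$-flats not containing $x$. Define $\mathbf{P}_{\text{unif}}:=q_0^{\otimes m}$, $\mathbf{P}_{x}:=q_x^{\otimes m}$ and $\mathbf{P}_{\text{planted}}:=2^{-n}\sum_{x\in\mathbb{F}_2^n}\mathbf{P}_x$. For $V=(V_1,\dots,V_m)$, $\mathcal{S}(V)=\mathbb{F}_2^n\setminus\bigcup_j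 V_j$ and $Z(V)=|\mathcal{S}(V)|$. $a\vee b=\max(a,b)$. *)

From HB Require Import structures.
From mathcomp Require Import all_boot all_order all_algebra.
From Stdlib Require Import Reals.
Set Implicit Arguments. Unset Strict Implicit. Unset Printing Implicit Defensive.

Notation pt n := ('rV['F_2]_n).

Definition is_kflat (n k : nat) (A : {set pt n}) : bool :=
  [exists L : 'M['F_2]_(k, n), exists e : 'cV['F_2]_k,
     (\rank L == k) && (A == [set x : pt n | mulmx L (trmx x) == e])].

Definition kflats (n k : nat) : {set {set pt n}} := [set A | is_kflat k A].

Definition kflats_avoid (n k : nat) (x : pt n) : {set {set pt n}} :=
  [set A in kflats n k | x \notin A].

Notation obs n m := {ffun 'I_m -> {set pt n}}.

Definition Rsum {T : finType} (P : pred T) (f : T -> R) : R :=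
  \big[Rplus/R0]_(t in P) f t.

Definition E_unif (n k m : nat) (f : obs n m -> R) : R :=
  Rdiv (Rsum (fun V : obs n m => [forall j, V j \in kflats n k]) f)
       (INR (expn #|kflats n k| m)).

Definition E_x (n k m : nat) (x : pt n) (f : obs n m -> R) : R :=
  Rdiv (Rsum (fun V : obs n m => [forall j, V j \in kflats_avoid k x]) f)
       (INR (expn #|kflats_avoid k x| m)).

Definition E_planted (n k m : nat) (f : obs n m -> R) : R :=
  Rdiv (Rsum (fun _ : pt n => true) (fun x => E_x k x f)) (INR (expn 2 n)).

Definition Zc (n m : nat) (V : obs n m) : nat :=
  #|~: (\bigcup_(j < m) V j)|.

Definition psi_flat (n m : nat) (V : obs n m) : R :=
  if (0 < Zc V)%N then R1 else R0.

(* A (possibly randomized) test: psi V in [0,1] is the probability of output 1. *)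
Definition is_test (n m : nat) (psi : obs n m -> R) : Prop :=
  forall V, Rle R0 (psi V) /\ Rle (psi V) R1.

Definition test_err (n k m : nat) (psi : obs n m -> R) : R :=
  Rmax (E_unif k psi) (E_planted k (fun V => Rminus R1 (psi V))).

Definition Delta_k (k : nat) : R :=
  Rdiv (ln (Rinv 2%R)) (ln (Rminus R1 (Rinv (pow 2%R k)))).

Definition m_of (Delta : R) (n : nat) : nat := Z.to_nat (Int_part (Rmult Delta (INR n))).

Definition is_inf (E : R -> Prop) (b : R) : Prop :=
  (forall y, E y -> Rle b y) /\ (forall c, (forall y, E y -> Rle c y) -> Rle c b).

(* Let Z(V) count the points covered by none of the m flats and mu := E_unif[Z].
   Under P_x the point x is never covered, so P_planted is the size-biased law
   E_planted[f] = E_unif[f Z] / mu, and Z > 0 almost surely under P_planted.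
   Invertible affine maps preserve k-flats and act 2-transitively on F_2^n, so by
   double counting a uniform k-flat contains a given point with probability 2^-k
   and two distinct points with probability at most 4^-k. Hence
   mu = 2^n (1 - 2^-k)^m = exp(n (ln 2 + Delta ln (1 - 2^-k)) + O(1)) and
   E_unif[Z^2] <= mu + mu^2.  If Delta > Delta_k then mu -> 0 and
   P_unif(Z > 0) <= mu.  If Delta < Delta_k then mu -> oo, and for every test
   P_unif(psi = 1) + P_planted(psi = 0) = E_unif[psi + (1 - psi) Z/mu]
   >= 1 - E_unif|Z/mu - 1| >= 1 - mu^(-1/2), using |w| <= (l w^2 + 1/l)/2 with
   l = sqrt mu and E_unif[(Z/mu - 1)^2] <= 1/mu; the constant test 1/2 has error
   exactly 1/2. *)

From HB Require Import structures.
From mathcomp Require Import all_boot all_order all_algebra.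
From mathcomp Require Import zify.
From Stdlib Require Import Reals Lra Psatz.
Set Implicit Arguments. Unset Strict Implicit. Unset Printing Implicit Defensive.
Import GRing.Theory.
(* [Reals] rebinds [^] on nat to [Nat.pow]. *)
Local Notation "m ^ n" := (expn m n) : nat_scope.

Lemma card_sum_mem (T : finType) (A : {set T}) : #|A| = \sum_x (x \in A).
Proof. by rewrite -sum1_card big_mkcond; apply: eq_bigr => x _; case: (x \in A). Qed.

Lemma card_set_cond (T : finType) (S P : pred T) : #|[set x in S | P x]| = \sum_(x in S) P x.
Proof.
rewrite card_sum_mem [RHS]big_mkcond; apply: eq_bigr => x _.
by rewrite inE; case: (x \in S).
Qed.

(** * k-flats and affine maps *)

Section AffineMaps.
Variables n k : nat.
Local Open Scope ring_scope.

Lemma card_pt : #|{: pt n}| = expn 2 n.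
Proof. by rewrite card_mx (@card_Fp 2 isT) mul1n. Qed.

Lemma card_kflat (A : {set pt n}) : A \in kflats n k -> (expn 2 k * #|A| = expn 2 n)%N.
Proof.
rewrite inE => /existsP[L /existsP[e /andP[/eqP rkL /eqP ->]]].
pose f (x : pt n) : 'cV['F_2]_k := L *m x^T.
have f_surj v : exists u, f u = v.
  have : (v^T <= L^T)%MS by apply: submx_full; rewrite /row_full mxrank_tr rkL.
  by case/submxP => u hu; exists u; rewrite /f -[v]trmxK hu trmx_mul trmxK.
have fD x y : f (x + y) = f x + f y by rewrite /f raddfD /= mulmxDr.
have fB x y : f (x - y) = f x - f y by rewrite /f raddfB /= mulmxBr.
have card_fibre v : #|[set x | f x == v]| = #|[set x | f x == 0]|.
  have [u fu] := f_surj v; rewrite -[RHS](card_imset _ (addIr u)).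
  apply: eq_card => y; rewrite [LHS]inE; apply/eqP/imsetP => [fy|[x]].
    by exists (y - u); rewrite ?subrK // inE fB fy fu subrr.
  by rewrite inE => /eqP fx ->; rewrite fD fx fu add0r.
have : #|{: pt n}| = (\sum_(v : 'cV['F_2]_k) #|[set x | f x == v]|)%N.
  rewrite -sum1_card (partition_big f predT) //=; apply: eq_bigr => v _.
  by rewrite -sum1_card; apply: eq_bigl => x; rewrite inE.
under eq_bigr do rewrite card_fibre.
rewrite card_pt sum_nat_const card_mx (@card_Fp 2 isT) muln1 => ->.
by rewrite card_fibre.
Qed.

Lemma kflats_nonempty : (k <= n)%nat -> (0 < #|kflats n k|)%nat.
Proof.
move=> kn; apply/card_gt0P; exists [set x : pt n | (pid_mx k : 'M_(k, n)) *m x^T == 0].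
rewrite inE; apply/existsP; exists (pid_mx k); apply/existsP; exists 0.
by rewrite rank_pid_mx // !eqxx.
Qed.

Definition aff (M : 'M['F_2]_n) (t x : pt n) : pt n := x *m M + t.

Lemma aff_inj M t : M \in unitmx -> injective (aff M t).
Proof. by move=> uM x y /addIr /(congr1 (mulmx^~ (invmx M))); rewrite !mulmxK. Qed.

Lemma kflat_aff M t A : M \in unitmx -> A \in kflats n k -> aff M t @: A \in kflats n k.
Proof.
move=> uM; rewrite !inE => /existsP[L /existsP[e /andP[/eqP rkL /eqP ->]]].
pose L' := L *m (invmx M)^T.
have L'M x : L' *m (x *m M)^T = L *m x^T.
  by rewrite /L' trmx_mul -mulmxA (mulmxA _ M^T) -trmx_mul mulmxV // trmx1 mul1mx.
apply/existsP; exists L'; apply/existsP; exists (e + L' *m t^T).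
rewrite mxrankMfree ?rkL ?eqxx /=; last by rewrite row_free_unit unitmx_tr unitmx_inv.
apply/eqP/setP => y; rewrite inE; apply/imsetP/eqP => [[x]|hy].
  by rewrite inE => /eqP hx ->; rewrite /aff raddfD /= mulmxDr L'M hx.
exists ((y - t) *m invmx M); last by rewrite /aff mulmxKV // subrK.
by rewrite inE -L'M mulmxKV // raddfB /= mulmxBr hy addrK.
Qed.

Lemma unitmx1_F2 (c : 'M['F_2]_1) : c \in unitmx -> c = 1.
Proof.
rewrite unitmxE det_mx11 unitfE [c]mx11_scalar => c0; congr (_%:M).
by apply/val_inj; move: c0; rewrite mxE; case: (c 0 0) => [[|[|i]] //].
Qed.

Lemma unitmx_row_transitive (d : pt n) : d != 0 ->
  exists2 M : 'M['F_2]_n, M \in unitmx & pid_mx 1 *m M = d.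
Proof.
move=> d0; exists (row_ebase d); first exact: row_ebase_unit.
have rk1 : \rank d = 1%N by apply/eqP; rewrite eqn_leq rank_leq_row lt0n mxrank_eq0.
by have := mulmx_ebase d; rewrite rk1 (unitmx1_F2 (col_ebase_unit d)) mul1mx.
Qed.

Lemma aff_two_transitive (x y x' y' : pt n) : x != y -> x' != y' ->
  exists2 M : 'M['F_2]_n, M \in unitmx & exists t, aff M t x = x' /\ aff M t y = y'.
Proof.
move=> xy x'y'.
have [M1 uM1 hM1] : exists2 M1, M1 \in unitmx & pid_mx 1 *m M1 = y - x.
  by apply: unitmx_row_transitive; rewrite subr_eq0 eq_sym.
have [M2 uM2 hM2] : exists2 M2, M2 \in unitmx & pid_mx 1 *m M2 = y' - x'.
  by apply: unitmx_row_transitive; rewrite subr_eq0 eq_sym.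
pose M := invmx M1 *m M2.
have hM : (y - x) *m M = y' - x' by rewrite -hM1 /M mulmxA mulmxK.
exists M; first by rewrite unitmx_mul unitmx_inv uM1.
exists (x' - x *m M); rewrite /aff addrC subrK; split=> //.
by rewrite addrCA -mulmxBl hM addrC subrK.
Qed.

End AffineMaps.

(** * Counting k-flats through given points *)

Definition kflats_through (n k : nat) (X : {set pt n}) : {set {set pt n}} :=
  [set A in kflats n k | X \subset A].

Section FlatsThroughPoints.
Variables n k : nat.
Local Notation K := (kflats n k).
Local Notation through := (@kflats_through n k).

Lemma card_kflats_through_aff_le X M t : M \in unitmx ->
  #|through X| <= #|through (aff M t @: X)|.
Proof.
move=> uM; rewrite -(card_imset _ (imset_inj (aff_inj (t := t) uM))).
apply/subset_leq_card/subsetP => B /imsetP[A]; rewrite inE => /andP[AK XA] ->.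
by rewrite inE kflat_aff ?imsetS.
Qed.

Lemma card_kflats_through1_const x y : #|through [set x]| = #|through [set y]|.
Proof.
suff le x' y' : #|through [set x']| <= #|through [set y']| by apply/eqP; rewrite eqn_leq !le.
have -> : [set y'] = aff 1%:M (y' - x') @: [set x'].
  by rewrite imset_set1 /aff mulmx1 addrC subrK.
exact/card_kflats_through_aff_le/unitmx1.
Qed.

Lemma card_kflats_through2_const x y x' y' : x != y -> x' != y' ->
  #|through [set x; y]| = #|through [set x'; y']|.
Proof.
suff le u v u' v' : u != v -> u' != v' -> #|through [set u; v]| <= #|through [set u'; v']|.
  by move=> xy x'y'; apply/eqP; rewrite eqn_leq !le.
move=> uv u'v'; have [M uM [t [hu hv]]] := aff_two_transitive uv u'v'.
have -> : [set u'; v'] = aff M t @: [set u; v] by rewrite imsetU1 imset_set1 hu hv.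
exact: card_kflats_through_aff_le.
Qed.

Lemma sum_card_kflats_through1 : \sum_x #|through [set x]| = \sum_(A in K) #|A|.
Proof.
under eq_bigr do rewrite card_set_cond.
rewrite exchange_big; apply: eq_bigr => A _; rewrite card_sum_mem.
by apply: eq_bigr => x _; rewrite sub1set.
Qed.

Lemma sum_card_kflats_through2 :
  \sum_x \sum_y #|through [set x; y]| = \sum_(A in K) #|A| * #|A|.
Proof.
under eq_bigr do under eq_bigr do rewrite card_set_cond.
under eq_bigr do rewrite exchange_big.
rewrite exchange_big; apply: eq_bigr => A _.
rewrite card_sum_mem big_distrl; apply: eq_bigr => x _.
rewrite big_distrr; apply: eq_bigr => y _.
by rewrite subUset !sub1set; case: (x \in A); case: (y \in A).
Qed.

Lemma card_kflats_through1 x : 2 ^ k * #|through [set x]| = #|K|.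
Proof.
have /eqP : 2 ^ k * \sum_(A in K) #|A| = #|K| * 2 ^ n.
  by rewrite big_distrr -sum_nat_const; apply: eq_bigr => A /card_kflat.
rewrite -sum_card_kflats_through1 (eq_bigr _ (fun y _ => card_kflats_through1_const y x)).
by rewrite sum_nat_const card_pt mulnCA [_ * 2 ^ n]mulnC eqn_pmul2l ?expn_gt0 // => /eqP.
Qed.

Lemma card_kflats_through2_le x y : x != y -> 2 ^ k * 2 ^ k * #|through [set x; y]| <= #|K|.
Proof.
move=> xy; set g := #|through [set x; y]|; set c := #|through [set x]|.
have N2 : 2 <= 2 ^ n by rewrite -card_pt; apply: leq_trans (max_card [set x; y]); rewrite cards2 xy.
have row_sum x' : \sum_y' #|through [set x'; y']| = c + (2 ^ n - 1) * g.
  rewrite (bigD1 x') //= setUid (card_kflats_through1_const x' x); congr (_ + _).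
  rewrite (eq_bigr (fun _ => g)) => [|y' y'x]; last first.
    by apply: card_kflats_through2_const => //; rewrite eq_sym.
  rewrite sum_nat_const; congr (_ * _).
  by rewrite -card_pt subn1 -(cardC1 x'); apply: eq_card => z; rewrite !inE.
have squares : 2 ^ k * 2 ^ k * \sum_(A in K) #|A| * #|A| = #|K| * (2 ^ n * 2 ^ n).
  rewrite big_distrr -sum_nat_const /=.
  by apply: eq_bigr => A /card_kflat <-; rewrite mulnACA.
rewrite -sum_card_kflats_through2 (eq_bigr _ (fun x' _ => row_sum x')) in squares.
rewrite sum_nat_const card_pt in squares.
have hc := card_kflats_through1 x; rewrite -/c in hc.
have P1 : 0 < 2 ^ k by rewrite expn_gt0.
move: squares N2 hc P1; set N := 2 ^ n; set P := 2 ^ k; set F := #|K| => squares N2 hc P1.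
(* With [P * c = F] this says [P * P * (N - 1) * g = F * (N - P) <= F * (N - 1)]. *)
have {}squares : P * P * (c + (N - 1) * g) = F * N.
  by apply/eqP; rewrite -(eqn_pmul2l (ltnW N2)); apply/eqP; rewrite mulnCA squares mulnCA.
nia.
Qed.

Lemma card_kflats_avoid x : #|kflats_avoid k x| + #|through [set x]| = #|K|.
Proof.
rewrite !card_set_cond -big_split -sum1_card; apply: eq_bigr => A _.
by rewrite sub1set; case: (x \in A).
Qed.

Lemma card_kflats_avoid2 x y :
  #|[set A in K | (x \notin A) && (y \notin A)]| + #|through [set x]| + #|through [set y]|
  = #|K| + #|through [set x; y]|.
Proof.
rewrite !card_set_cond -!big_split -sum1_card -big_split; apply: eq_bigr => A _.
by rewrite subUset !sub1set; case: (x \in A); case: (y \in A).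
Qed.

End FlatsThroughPoints.

(** * First and second moments of Z *)

Fact Rplus_assoc' : associative Rplus.
Proof. by move=> x y z; rewrite Rplus_assoc. Qed.
Fact Rmult_assoc' : associative Rmult.
Proof. by move=> x y z; rewrite Rmult_assoc. Qed.
HB.instance Definition _ := Monoid.isComLaw.Build R R0 Rplus Rplus_assoc' Rplus_comm Rplus_0_l.
HB.instance Definition _ := Monoid.isComLaw.Build R R1 Rmult Rmult_assoc' Rmult_comm Rmult_1_l.
HB.instance Definition _ := Monoid.isMulLaw.Build R R0 Rmult Rmult_0_l Rmult_0_r.
HB.instance Definition _ := Monoid.isAddLaw.Build R Rmult Rplus
  Rmult_plus_distr_r Rmult_plus_distr_l.

Local Open Scope R_scope.

Section Rsum.
Variable T : finType.
Implicit Types (P : pred T) (f g : T -> R).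

Lemma Rsum_ext P f g : (forall t, P t -> f t = g t) -> Rsum P f = Rsum P g.
Proof. exact: eq_bigr. Qed.

Lemma Rsum_eq_pred P Q f : P =1 Q -> Rsum P f = Rsum Q f.
Proof. by move=> PQ; apply: eq_bigl => t; rewrite !unfold_in PQ. Qed.

Lemma Rsum_le P f g : (forall t, P t -> f t <= g t) -> Rsum P f <= Rsum P g.
Proof. by move=> fg; apply: (big_ind2 Rle) => //; [apply: Rle_refl | apply: Rplus_le_compat]. Qed.

Lemma Rsum_plus P f g : Rsum P (fun t => f t + g t) = Rsum P f + Rsum P g.
Proof. exact: big_split. Qed.

Lemma Rsum_scal P c f : Rsum P (fun t => c * f t) = c * Rsum P f.
Proof. by rewrite /Rsum big_distrr. Qed.

Lemma Rsum_INR P (f : T -> nat) : Rsum P (fun t => INR (f t)) = INR (\sum_(t in P) f t)%N.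
Proof. by apply/esym/(big_morph INR plus_INR). Qed.

Lemma Rsum_const P c : Rsum P (fun _ => c) = INR #|P| * c.
Proof.
rewrite -sum1_card -Rsum_INR Rmult_comm -Rsum_scal.
by apply: Rsum_ext => t _; rewrite Rmult_1_r.
Qed.

Lemma Rsum_mkcond P Q f :
  Rsum (fun t => P t && Q t) f = Rsum P (fun t => if Q t then f t else 0).
Proof.
rewrite /Rsum big_mkcond [RHS]big_mkcond; apply: eq_bigr => t _.
by rewrite !unfold_in /=; case: (P t); case: (Q t).
Qed.

End Rsum.

Lemma Rsum_exchange (T1 T2 : finType) (P1 : pred T1) (P2 : pred T2) (f : T1 -> T2 -> R) :
  Rsum P1 (fun a => Rsum P2 (f a)) = Rsum P2 (fun b => Rsum P1 (fun a => f a b)).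
Proof. exact: exchange_big. Qed.

Lemma INR_expn a b : INR (expn a b) = INR a ^ b.
Proof. by elim: b => [|b IH]; rewrite ?expnS ?mult_INR ?IH. Qed.

Lemma INR_expn2 b : INR (expn 2 b) = 2 ^ b.
Proof. by rewrite INR_expn; congr (_ ^ _); rewrite /=; lra. Qed.

Lemma mix_ge_amgm (p w l : R) : 0 <= p <= 1 -> 0 < l ->
  1 - l * w ^ 2 / 2 - / (2 * l) <= p + (1 - p) * (1 + w).
Proof.
move=> p01 l0.
have sq : 0 <= l * w ^ 2 / 2 + w + / (2 * l).
  have -> : l * w ^ 2 / 2 + w + / (2 * l) = (l * w + 1) ^ 2 * / (2 * l) by field; lra.
  by apply: Rmult_le_pos; [apply: pow2_ge_0 | apply/Rlt_le/Rinv_0_lt_compat; lra].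
have : 0 <= / (2 * l) by apply/Rlt_le/Rinv_0_lt_compat; lra.
have : 0 <= l * w ^ 2 / 2 by have := pow2_ge_0 w; nra.
by case: (Rle_lt_dec 0 w) => w0; nra.
Qed.

Definition avoids (n m : nat) (x : pt n) (V : obs n m) : bool := [forall j, x \notin V j].

Lemma INR_Zc (n m : nat) (V : obs n m) :
  INR (Zc V) = Rsum (fun _ => true) (fun x => if avoids x V then 1 else 0).
Proof.
rewrite /Zc card_sum_mem -Rsum_INR; apply: Rsum_ext => x _.
suff -> : (x \in ~: \bigcup_(j < m) V j) = avoids x V by case: avoids.
rewrite in_setC; apply/negP/forallP => [xV j|xV /bigcupP[j _]].
  by apply/negP => xVj; apply: xV; apply/bigcupP; exists j.
by apply/negP/xV.
Qed.

Lemma Rsum_pt_const (n : nat) (c : R) : Rsum (fun _ : pt n => true) (fun _ => c) = 2 ^ n * c.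
Proof. by rewrite Rsum_const -INR_expn2 -card_pt; congr (INR _ * _); apply: eq_card. Qed.

Definition Zmean (n k m : nat) : R := 2 ^ n * (1 - / 2 ^ k) ^ m.

Section Expectations.
Variables n k m : nat.
Local Notation K := (kflats n k).
Local Notation F := (INR #|K|).
Local Notation r := (1 - / 2 ^ k).
Local Notation onK := (fun V : obs n m => [forall j, V j \in K]).
Hypothesis k_le_n : (k <= n)%nat.
Implicit Types (f g : obs n m -> R).

Lemma INR_card_kflats_gt0 : 0 < F.
Proof. by apply/lt_0_INR/ltP; apply: kflats_nonempty. Qed.

Lemma E_unifE f : E_unif k f = Rsum onK f / F ^ m.
Proof. by rewrite /E_unif INR_expn. Qed.

Lemma E_unif_ext f g : (forall V, onK V -> f V = g V) -> E_unif k f = E_unif k g.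
Proof. by move=> fg; rewrite !E_unifE (Rsum_ext fg). Qed.

Lemma E_unif_plus f g : E_unif k (fun V => f V + g V) = E_unif k f + E_unif k g.
Proof. by rewrite !E_unifE Rsum_plus /Rdiv Rmult_plus_distr_r. Qed.

Lemma E_unif_scal c f : E_unif k (fun V => c * f V) = c * E_unif k f.
Proof. by rewrite !E_unifE Rsum_scal /Rdiv Rmult_assoc. Qed.

Lemma E_unif_sum (T : finType) (h : T -> obs n m -> R) :
  E_unif k (fun V => Rsum (fun _ => true) (fun t => h t V))
  = Rsum (fun _ => true) (fun t => E_unif k (h t)).
Proof.
rewrite E_unifE Rsum_exchange /Rdiv /Rsum big_distrl.
by apply: eq_bigr => t _; rewrite E_unifE.
Qed.

Lemma E_unif_le f g : (forall V, f V <= g V) -> E_unif k f <= E_unif k g.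
Proof.
move=> fg; rewrite !E_unifE; apply: Rmult_le_compat_r; last by apply: Rsum_le.
by apply/Rlt_le/Rinv_0_lt_compat/pow_lt/INR_card_kflats_gt0.
Qed.

Lemma Rsum1_families (S : {set {set pt n}}) :
  Rsum (fun V : obs n m => [forall j, V j \in S]) (fun _ => 1) = INR #|S| ^ m.
Proof.
rewrite Rsum_const Rmult_1_r -INR_expn -[in expn _ m](card_ord m) -card_ffun_on.
by congr INR; apply: eq_card => V; rewrite unfold_in.
Qed.

Lemma E_unif_const c : E_unif k (fun _ : obs n m => c) = c.
Proof.
have F0 := INR_card_kflats_gt0.
rewrite E_unifE (Rsum_ext (g := fun _ => c * 1)) => [|V _]; last by rewrite Rmult_1_r.
by rewrite Rsum_scal Rsum1_families; field; apply: pow_nonzero; lra.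
Qed.

Hypothesis k_ge1 : (1 <= k)%nat.

Lemma INR_card_kflats_through1 (x : pt n) : INR #|kflats_through k [set x]| = F / 2 ^ k.
Proof.
have P0 : 0 < 2 ^ k by apply: pow_lt; lra.
rewrite -(card_kflats_through1 k x) mult_INR INR_expn2.
by set c := INR _; field; lra.
Qed.

Lemma INR_card_kflats_avoid (x : pt n) : INR #|kflats_avoid k x| = F * r.
Proof.
have := card_kflats_avoid k x; move/(congr1 INR); rewrite plus_INR INR_card_kflats_through1.
have P0 : 0 < 2 ^ k by apply: pow_lt; lra.
by move=> h; apply: (Rplus_eq_reg_r (F / 2 ^ k)); rewrite h; field; lra.
Qed.

Lemma INR_card_kflats_avoid2_le (x y : pt n) : x != y ->
  INR #|[set A in K | (x \notin A) && (y \notin A)]| <= F * r ^ 2.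
Proof.
move=> xy; have := card_kflats_avoid2 k x y; move/(congr1 INR).
rewrite !plus_INR !INR_card_kflats_through1.
have /leP/le_INR := card_kflats_through2_le k xy; rewrite !mult_INR !INR_expn2.
have : 0 < 2 ^ k by apply: pow_lt; lra.
set P := 2 ^ k; set g := INR #|kflats_through k [set x; y]|.
set b := INR #|[set A in K | _]|; set f := F => P0 hg hb.
have {}hg : g <= f * (/ P) ^ 2.
  have -> : g = P * P * g * (/ P) ^ 2 by field; lra.
  by apply: Rmult_le_compat_r => //; apply: pow2_ge_0.
have -> : f * (1 - / P) ^ 2 = f - 2 * (f / P) + f * (/ P) ^ 2 by field; lra.
lra.
Qed.

Lemma one_sub_inv_pow2_gt0 : 0 < r.
Proof.
have : / 2 ^ k <= / 2 ^ 1 by apply: Rinv_le_contravar; [lra | apply: Rle_pow; [lra | exact/leP]].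
lra.
Qed.

Lemma E_unif_family (S : {set {set pt n}}) : S \subset K ->
  E_unif k (fun V : obs n m => if [forall j, V j \in S] then 1 else 0) = (INR #|S| / F) ^ m.
Proof.
move=> SK; have F0 := INR_card_kflats_gt0.
rewrite E_unifE -Rsum_mkcond (Rsum_eq_pred _ (Q := fun V : obs n m => [forall j, V j \in S])).
  by rewrite Rsum1_families /Rdiv Rpow_mult_distr pow_inv.
move=> V /=; apply/andP/idP => [[//]|VS]; split=> //.
by apply/forallP => j; apply: (subsetP SK); apply: (forallP VS).
Qed.

Lemma forall_kflats_avoid (x : pt n) (V : obs n m) :
  [forall j, V j \in kflats_avoid k x] = onK V && avoids x V.
Proof.
apply/forallP/andP => [VA|[/forallP VK /forallP xV] j]; last by rewrite inE VK xV.
by split; apply/forallP => j; have := VA j; rewrite inE => /andP[].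
Qed.

Lemma E_unif_avoids (x : pt n) :
  E_unif k (fun V : obs n m => if avoids x V then 1 else 0) = r ^ m.
Proof.
have F0 := INR_card_kflats_gt0.
rewrite (E_unif_ext (g := fun V => if [forall j, V j \in kflats_avoid k x] then 1 else 0)).
  rewrite E_unif_family; last by apply/subsetP => A; rewrite inE => /andP[].
  by rewrite INR_card_kflats_avoid /Rdiv Rmult_comm -Rmult_assoc Rinv_l ?Rmult_1_l //; lra.
by move=> V VK; rewrite forall_kflats_avoid VK.
Qed.

Lemma E_unif_avoids2_le (x y : pt n) :
  E_unif k (fun V : obs n m => if avoids x V && avoids y V then 1 else 0)
  <= (if y == x then r ^ m else 0) + (r ^ 2) ^ m.
Proof.
have r2 : 0 <= (r ^ 2) ^ m by apply/pow_le/pow2_ge_0.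
have [->|yx] := eqVneq y x.
  by under E_unif_ext => V _ do rewrite andbb; rewrite E_unif_avoids; lra.
pose B := [set A in K | (x \notin A) && (y \notin A)].
rewrite (E_unif_ext (g := fun V => if [forall j, V j \in B] then 1 else 0)).
  rewrite E_unif_family; last by apply/subsetP => A; rewrite inE => /andP[].
  have F0 := INR_card_kflats_gt0.
  have xy : x != y by rewrite eq_sym.
  rewrite Rplus_0_l; apply: pow_incr; split.
    by apply/Rmult_le_pos/Rlt_le/Rinv_0_lt_compat/F0/pos_INR.
  apply: (Rmult_le_reg_r F) => //; rewrite /Rdiv Rmult_assoc Rinv_l ?Rmult_1_r; last lra.
  by rewrite Rmult_comm; apply: INR_card_kflats_avoid2_le.
move=> V /forallP VK; congr (if _ then _ else _).
apply/andP/forallP => [[/forallP xV /forallP yV] j|VB]; first by rewrite inE VK xV yV.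
by split; apply/forallP => j; have := VB j; rewrite inE => /and3P[].
Qed.

Lemma E_unif_Zc : E_unif k (fun V : obs n m => INR (Zc V)) = Zmean n k m.
Proof.
under E_unif_ext => V _ do rewrite INR_Zc.
by rewrite E_unif_sum (Rsum_ext (g := fun _ => r ^ m)) ?Rsum_pt_const // => x _; apply: E_unif_avoids.
Qed.

Lemma E_unif_Zc_sq : E_unif k (fun V : obs n m => INR (Zc V) ^ 2) <= Zmean n k m + Zmean n k m ^ 2.
Proof.
rewrite (E_unif_ext (g := fun V => Rsum (fun _ => true) (fun x => Rsum (fun _ => true)
  (fun y => if avoids x V && avoids y V then 1 else 0)))) => [|V _]; last first.
  rewrite INR_Zc /= Rmult_1_r /Rsum big_distrl; apply: eq_bigr => x _.
  rewrite big_distrr; apply: eq_bigr => y _.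
  by case: avoids; case: avoids; rewrite /= ?Rmult_1_r ?Rmult_0_r ?Rmult_0_l.
rewrite E_unif_sum; under Rsum_ext => x _ do rewrite E_unif_sum.
apply: Rle_trans (Rsum_le (g := fun x => Rsum (fun _ => true) (fun y => _)) _) _.
  by move=> x _; apply: Rsum_le => y _; apply: E_unif_avoids2_le.
under Rsum_ext => x _ do rewrite Rsum_plus Rsum_pt_const /Rsum -big_mkcondr big_pred1_eq.
rewrite Rsum_pt_const /Zmean -pow_mult Nat.mul_comm pow_mult; right; ring.
Qed.

Lemma E_x_E_unif (x : pt n) (g : obs n m -> R) :
  E_x k x g = E_unif k (fun V => if avoids x V then g V else 0) / r ^ m.
Proof.
have F0 := INR_card_kflats_gt0; have r0 := one_sub_inv_pow2_gt0.
rewrite /E_x E_unifE -Rsum_mkcond INR_expn INR_card_kflats_avoid.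
by rewrite (Rsum_eq_pred _ (forall_kflats_avoid x)) Rpow_mult_distr /Rdiv Rinv_mult Rmult_assoc.
Qed.

Lemma E_planted_size_biased (g : obs n m -> R) :
  E_planted k g = E_unif k (fun V => g V * INR (Zc V)) / Zmean n k m.
Proof.
have r0 := one_sub_inv_pow2_gt0.
have avoids_mul x V : (if avoids x V then g V else 0) = g V * (if avoids x V then 1 else 0).
  by case: avoids; rewrite ?Rmult_1_r ?Rmult_0_r.
under E_unif_ext => V _ do rewrite INR_Zc -Rsum_scal.
rewrite /E_planted; under Rsum_ext => x _ do rewrite E_x_E_unif (E_unif_ext (fun V _ => avoids_mul x V)).
rewrite E_unif_sum INR_expn2 /Zmean /Rdiv /Rsum -big_distrl /=.
by field; split; apply: pow_nonzero; lra.
Qed.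

Lemma Zmean_pos : 0 < Zmean n k m.
Proof. by apply: Rmult_lt_0_compat; apply: pow_lt; [lra | exact: one_sub_inv_pow2_gt0]. Qed.

Lemma E_unif_Zc_rel_var_le :
  E_unif k (fun V : obs n m => (INR (Zc V) / Zmean n k m - 1) ^ 2) <= / Zmean n k m.
Proof.
have mu0 := Zmean_pos; set mu := Zmean n k m in mu0 *.
have expand (V : obs n m) : (INR (Zc V) / mu - 1) ^ 2
    = / mu ^ 2 * INR (Zc V) ^ 2 + (- 2 / mu * INR (Zc V) + 1).
  by set z := INR _; field; lra.
rewrite (E_unif_ext (fun V _ => expand V)) !E_unif_plus !E_unif_scal E_unif_const E_unif_Zc -/mu.
have : / mu ^ 2 * E_unif k (fun V : obs n m => INR (Zc V) ^ 2) <= / mu ^ 2 * (mu + mu ^ 2).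
  by apply: Rmult_le_compat_l; [apply/Rlt_le/Rinv_0_lt_compat/pow_lt | apply: E_unif_Zc_sq].
have -> : / mu ^ 2 * (mu + mu ^ 2) = / mu + 1 by field; lra.
have -> : - 2 / mu * mu = - 2 by field; lra.
lra.
Qed.

Lemma test_err_psi_flat_bounds : 0 <= test_err k (@psi_flat n m) <= Zmean n k m.
Proof.
have mu0 := Zmean_pos.
have flat_le_Zc (V : obs n m) : 0 <= psi_flat V <= INR (Zc V).
  rewrite /psi_flat; case: ltnP => [/leP/le_INR|]; first by rewrite INR_1; lra.
  by split; [lra | apply: pos_INR].
rewrite /test_err.
have -> : E_planted k (fun V => R1 - @psi_flat n m V) = 0.
  rewrite E_planted_size_biased (E_unif_ext (g := fun _ => 0)) ?E_unif_const /Rdiv ?Rmult_0_l //.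
  move=> V _; rewrite /psi_flat; case: ltnP => [_|]; first by rewrite Rminus_diag Rmult_0_l.
  by rewrite leqn0 => /eqP ->; rewrite Rmult_0_r.
have unif_bound : 0 <= E_unif k (@psi_flat n m) <= Zmean n k m.
  rewrite -E_unif_Zc -(E_unif_const 0).
  by split; apply: E_unif_le => V; case: (flat_le_Zc V).
by rewrite Rmax_left; lra.
Qed.

Lemma test_err_const_half : test_err k (fun _ : obs n m => / 2) = / 2.
Proof.
have mu0 := Zmean_pos.
rewrite /test_err E_planted_size_biased E_unif_scal E_unif_Zc E_unif_const.
have -> : (R1 - / 2) * Zmean n k m / Zmean n k m = / 2 by field; lra.
exact: Rmax_left (Rle_refl _).
Qed.

Lemma test_err_ge (psi : obs n m -> R) : is_test psi ->
  (1 - / sqrt (Zmean n k m)) / 2 <= test_err k psi.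
Proof.
move=> psi01; have mu0 := Zmean_pos; set mu := Zmean n k m in mu0 *.
have l0 : 0 < sqrt mu by apply: sqrt_lt_R0.
have l2 : sqrt mu ^ 2 = mu by apply/pow2_sqrt/Rlt_le.
set l := sqrt mu in l0 l2 *; set w := fun V : obs n m => INR (Zc V) / mu - 1.
have mix : E_unif k psi + E_planted k (fun V => R1 - psi V)
    = E_unif k (fun V => psi V + (R1 - psi V) * (1 + w V)).
  rewrite E_planted_size_biased E_unif_plus /Rdiv Rmult_comm -E_unif_scal.
  by congr (_ + _); apply: E_unif_ext => V _; rewrite /w -/mu; set z := INR _; field; lra.
have amgm : E_unif k (fun V => (1 - / (2 * l)) + (- (l / 2)) * w V ^ 2)
    <= E_unif k psi + E_planted k (fun V => R1 - psi V).
  rewrite mix; apply: E_unif_le => V.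
  have -> : 1 - / (2 * l) + - (l / 2) * w V ^ 2 = 1 - l * w V ^ 2 / 2 - / (2 * l) by field; lra.
  exact: mix_ge_amgm.
rewrite E_unif_plus E_unif_const E_unif_scal in amgm.
have := E_unif_Zc_rel_var_le; rewrite -/mu -/w => var_bound.
have : - (l / 2) * / mu <= - (l / 2) * E_unif k (fun V => w V ^ 2).
  by apply: Rmult_le_compat_neg_l => //; lra.
have -> : - (l / 2) * / mu = - / (2 * l) by rewrite -l2; field; lra.
have := Rmax_l (E_unif k psi) (E_planted k (fun V => R1 - psi V)).
have := Rmax_r (E_unif k psi) (E_planted k (fun V => R1 - psi V)).
rewrite /test_err; have -> : / l = 2 * / (2 * l) by field; lra.
lra.
Qed.

Lemma inf_test_err_bounds (b : R) :
  is_inf (fun e => exists psi : obs n m -> R, is_test psi /\ e = test_err k psi) b ->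
  (1 - / sqrt (Zmean n k m)) / 2 <= b <= / 2.
Proof.
case=> lower greatest; split.
  by apply: greatest => _ [psi [psi01 ->]]; apply: test_err_ge.
rewrite -test_err_const_half; apply: lower; exists (fun _ => / 2); split=> // V; lra.
Qed.

End Expectations.

(** * Asymptotics *)

Lemma Un_cv_geom_dominated (u : nat -> R) (l c q : R) (N0 : nat) : 0 <= q < 1 ->
  (forall n, (N0 <= n)%nat -> Rabs (u n - l) <= c * q ^ n) -> Un_cv u l.
Proof.
move=> q01 dom eps eps0; have c1 : 0 < Rabs c + 1 by have := Rabs_pos c; lra.
have [N qN] : exists N, forall n, (n >= N)%coq_nat -> Rabs (q ^ n) < eps / (Rabs c + 1).
  by apply: pow_lt_1_zero; [rewrite Rabs_right; lra | apply: Rdiv_lt_0_compat].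
exists (N + N0)%nat => n nN; rewrite /R_dist.
have /qN : (n >= N)%coq_nat by lia.
have /dom : (N0 <= n)%nat by apply/leP; lia.
have qn0 : 0 <= q ^ n by apply: pow_le; lra.
move=> un_le /(Rle_lt_trans _ _ _ (RRle_abs _)) qn_lt; apply: Rle_lt_trans un_le _.
have : c * q ^ n <= Rabs c * q ^ n by apply: Rmult_le_compat_r => //; apply: RRle_abs.
have : (Rabs c + 1) * q ^ n < eps.
  have -> : eps = (Rabs c + 1) * (eps / (Rabs c + 1)) by field; lra.
  exact: Rmult_lt_compat_l.
nra.
Qed.

Lemma m_of_bounds (Delta : R) (n : nat) : 0 < Delta ->
  Delta * INR n - 1 < INR (m_of Delta n) <= Delta * INR n.
Proof.
move=> D0; rewrite /m_of; have [hi lo] := base_Int_part (Delta * INR n).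
have x0 : 0 <= Delta * INR n by apply: Rmult_le_pos; [lra | apply: pos_INR].
set z := Int_part _ in hi lo *.
have z0 : (-1 < z)%Z by apply: lt_IZR; lra.
by rewrite [INR (Z.to_nat _)]INR_IZR_INZ Znat.Z2Nat.id; [lra | lia].
Qed.

Lemma exp_le_compat x y : x <= y -> exp x <= exp y.
Proof. by case/Rle_lt_or_eq_dec => [/exp_increasing/Rlt_le | ->] //; apply: Rle_refl. Qed.

Lemma exp_pow (x : R) (n : nat) : exp x ^ n = exp (INR n * x).
Proof.
elim: n => [|n IH]; first by rewrite Rmult_0_l exp_0.
by rewrite S_INR Rmult_plus_distr_r Rmult_1_l exp_plus -IH /= Rmult_comm.
Qed.

Definition growth_rate (k : nat) (Delta : R) : R := ln 2 + Delta * ln (1 - / 2 ^ k).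

Section GrowthRate.
Variables (k : nat) (Delta : R).
Hypotheses (k_ge1 : (1 <= k)%nat) (Delta_pos : 0 < Delta).
Local Notation r := (1 - / 2 ^ k).

Lemma ln_one_sub_inv_pow2_lt0 : ln r < 0.
Proof.
have inv_gt0 : 0 < / 2 ^ k by apply/Rinv_0_lt_compat/pow_lt; lra.
by rewrite -ln_1; apply: ln_increasing; [exact: one_sub_inv_pow2_gt0 | lra].
Qed.

Lemma growth_rateE : growth_rate k Delta = (Delta - Delta_k k) * ln r.
Proof.
have := ln_one_sub_inv_pow2_lt0; rewrite /growth_rate /Delta_k ln_Rinv; last lra.
by set L := ln r => L0; field; lra.
Qed.

Lemma growth_rate_neg : Delta_k k < Delta -> growth_rate k Delta < 0.
Proof. by have := ln_one_sub_inv_pow2_lt0; rewrite growth_rateE; nra. Qed.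

Lemma growth_rate_pos : Delta < Delta_k k -> 0 < growth_rate k Delta.
Proof. by have := ln_one_sub_inv_pow2_lt0; rewrite growth_rateE; nra. Qed.

Lemma Zmean_m_of_bounds (n : nat) :
  exp (growth_rate k Delta) ^ n <= Zmean n k (m_of Delta n) <= / r * exp (growth_rate k Delta) ^ n.
Proof.
have r0 := one_sub_inv_pow2_gt0 k_ge1; have L0 := ln_one_sub_inv_pow2_lt0; have [m_lo m_hi] := m_of_bounds n Delta_pos.
have -> : Zmean n k (m_of Delta n) = exp (INR n * ln 2 + INR (m_of Delta n) * ln r).
  by rewrite /Zmean exp_plus -!ln_pow ?exp_ln //; try apply: pow_lt; lra.
have -> : / r = exp (- ln r) by rewrite exp_Ropp exp_ln.
rewrite exp_pow -exp_plus /growth_rate; split; apply: exp_le_compat; nra.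
Qed.

Lemma inv_sqrt_Zmean_m_of_le (n : nat) :
  / sqrt (Zmean n k (m_of Delta n)) <= exp (- growth_rate k Delta / 2) ^ n.
Proof.
have [lo _] := Zmean_m_of_bounds n; move: lo; rewrite !exp_pow.
set c := INR n * growth_rate k Delta => lo.
have -> : exp (INR n * (- growth_rate k Delta / 2)) = / sqrt (exp c).
  have -> : exp c = exp (c / 2) ^ 2 by rewrite /= Rmult_1_r -exp_plus; congr exp; field.
  by rewrite sqrt_pow2 -?exp_Ropp; [congr exp; rewrite /c; field | apply/Rlt_le/exp_pos].
by apply/Rinv_le_contravar/sqrt_le_1_alt => //; apply/sqrt_lt_R0/exp_pos.
Qed.

End GrowthRate.

Close Scope R_scope.

Theorem mainTheorem5 (k : nat) (Delta : R) :
  (1 <= k)%N -> Rlt R0 Delta ->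
  (Rlt (Delta_k k) Delta ->
     Un_cv (fun n => test_err k (@psi_flat n (m_of Delta n))) R0) /\
  (Rlt Delta (Delta_k k) ->
     forall I : nat -> R,
       (forall n, (k <= n)%N ->
          is_inf (fun r => exists psi : {ffun 'I_(m_of Delta n) -> {set 'rV['F_2]_n}} -> R,
                             is_test psi /\ r = test_err k psi) (I n)) ->
       Un_cv I (Rinv 2)).
Proof.
move=> k1 D0; split=> [D_gt | D_lt I I_inf].
- have c0 := growth_rate_neg k1 D_gt.
  apply: (Un_cv_geom_dominated (N0 := k) (c := (/ (1 - / 2 ^ k))%R) (q := exp (growth_rate k Delta))).
    by split; [apply/Rlt_le/exp_pos | rewrite -exp_0; apply: exp_increasing].
  move=> n kn; have [err0 err_le] := test_err_psi_flat_bounds (m_of Delta n) kn k1.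
  have [_ mu_le] := Zmean_m_of_bounds k1 D0 n.
  by rewrite Rminus_0_r Rabs_right; lra.
- have c0 := growth_rate_pos k1 D_lt.
  apply: (Un_cv_geom_dominated (N0 := k) (c := (/ 2)%R) (q := exp (- growth_rate k Delta / 2)%R)).
    by split; [apply/Rlt_le/exp_pos | rewrite -exp_0; apply: exp_increasing; lra].
  move=> n kn; have [lo hi] := inf_test_err_bounds kn k1 (I_inf n kn).
  have := inv_sqrt_Zmean_m_of_le k1 D0 n.
  by rewrite Rabs_left1; lra.
Qed.
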